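(* Let $T$ be a rooted binary phylogenetic tree with root $\rho$ of out-degree 2 and leaf set $X$, under the $N_r$ model for any $r\ge2$. For $x\in X$ let $d(x)$ be the number of edges on the path from $\rho$ to $x$. Then (i) $RA_\varphi(T)=1-\sum_{x\in X}\left(\tfrac12\right)^{d(x)}p(x)$; (ii) $RA_\varphi(T)\ge 1-p_{\max}$ where $p_{\max}=\max\{p(x):x\in X\}$; (iii) if $p(x)$ takes the same value for all leaves $x\in X$ (the ultrametric case), then $RA_\varphi(T)=1-p_{\max}$.
   Context: A rooted binary phylogenetic tree is a finite tree with a distinguished root vertex $\rho$, all edges directed away from $\rho$, in which $\rho$ has out-degree 2 (or 1), and every other vertex has in-degree 1 and out-degree 0 or 2; out-degree-0 vertices are leaves, forming the leaf set $X$. Under the Neyman $r$-state model $N_r$ ($r\ge2$) on a state set $\mathcal A$ with $|\mathcal A|=r$, each edge $e$ carries a substitution probability $p_e\in[0,\frac{r-1}{r}]$; given $F(\rho)$, states propagate independently along edges: for an edge $(u,v)$, $F(v)=F(u)$ with probability $1-p_e$, and otherwise $F(v)$ is uniform among the $r-1$ other states. The character is $f=F|_X$, and $p(v)$ is the probability that $F(v)\neq F(\rho)$. The coin-toss method $\varphi$: each leaf is assigned its state $f(x)$; proceeding towards the root, a vertex whose two children have been assigned the same state gets that state, and a vertex whose children have different states gets one of the two states chosen by an independent fair coin toss (a vertex with a single child gets its child's state). $\varphi(T,f)$ is the state assigned to the root, and $RA_\varphi(T)=\mathbb P(\varphi(T,f)=\alpha\mid F(\rho)=\alpha)$. *)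

From HB Require Import structures.
From mathcomp Require Import all_boot all_order all_algebra.
Set Implicit Arguments. Unset Strict Implicit. Unset Printing Implicit Defensive.
Import Order.TTheory GRing.Theory Num.Theory.
Local Open Scope ring_scope.

(* Rooted binary phylogenetic trees with edge substitution probabilities.
   [Node pl l pr rt] is an internal vertex with two children [l] and [rt];
   [pl] (resp. [pr]) is the substitution probability p_e of the edge to [l]
   (resp. [rt]).  Leaves are numbered left-to-right 0 .. nleaves t - 1. *)
Inductive tree (R : Type) :=
| Leaf : tree R
| Node : R -> tree R -> R -> tree R -> tree R.
Arguments Leaf {R}.

Section Model.
Variable R : realFieldType.
Variable r : nat.

Fixpoint nleaves (t : tree R) : nat :=
  match t with Leaf => 1%N | Node _ l _ rt => (nleaves l + nleaves rt)%N end.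

Fixpoint ninternal (t : tree R) : nat :=
  match t with Leaf => 0%N | Node _ l _ rt => (ninternal l + ninternal rt).+1 end.

Fixpoint depths (t : tree R) : seq nat :=
  match t with
  | Leaf => [:: 0%N]
  | Node _ l _ rt => map S (depths l) ++ map S (depths rt)
  end.

Definition is_node (t : tree R) : bool :=
  if t is Node _ _ _ _ then true else false.

Fixpoint valid_probs (t : tree R) : Prop :=
  match t with
  | Leaf => True
  | Node pl l pr rt =>
      [/\ 0 <= pl <= (r.-1)%:R / r%:R, 0 <= pr <= (r.-1)%:R / r%:R,
          valid_probs l & valid_probs rt]
  end.

Definition trans (p : R) (a b : 'I_r) : R :=
  if a == b then 1 - p else p / (r.-1)%:R.

(* P(f = F|_X | F(root) = a) for a character f listed in leaf order *)
Fixpoint Pchar (t : tree R) (a : 'I_r) (f : seq 'I_r) : R :=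
  match t with
  | Leaf => if f is [:: b] then (b == a)%:R else 0
  | Node pl l pr rt =>
      (\sum_(b : 'I_r) trans pl a b * Pchar l b (take (nleaves l) f)) *
      (\sum_(b : 'I_r) trans pr a b * Pchar rt b (drop (nleaves l) f))
  end.

(* Coin-toss method with explicit coins: one coin per internal vertex
   (listed in preorder); [d] is an irrelevant default state. *)
Fixpoint phi (d : 'I_r) (t : tree R) (f : seq 'I_r) (c : seq bool) : 'I_r :=
  match t with
  | Leaf => nth d f 0
  | Node _ l _ rt =>
      let cs := behead c in
      let sl := phi d l (take (nleaves l) f) (take (ninternal l) cs) in
      let sr := phi d rt (drop (nleaves l) f) (drop (ninternal l) cs) in
      if sl == sr then sl else if head false c then sl else sr
  end.

(* RA_phi(T) = P(phi(T,f) = alpha | F(root) = alpha), fair independent coins *)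
Definition RA (t : tree R) (alpha : 'I_r) : R :=
  \sum_(f : (nleaves t).-tuple 'I_r)
    Pchar t alpha f *
    (\sum_(c : (ninternal t).-tuple bool)
        (phi alpha t f c == alpha)%:R / 2%:R ^+ ninternal t).

(* p(x) = P(F(x) <> F(root) | F(root) = alpha) for the leaf x numbered i *)
Definition pleaf (t : tree R) (alpha : 'I_r) (i : nat) : R :=
  \sum_(f : (nleaves t).-tuple 'I_r)
    (nth alpha f i != alpha)%:R * Pchar t alpha f.

(* p_max = max over leaves; all p(x) >= 0 and there is >= 1 leaf,
   so 0 as the neutral element is harmless *)
Definition pmax (t : tree R) (alpha : 'I_r) : R :=
  \big[Num.max/0]_(i < nleaves t) pleaf t alpha i.

End Model.

(* The coin-toss method returns the state of a single leaf, chosen at random: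
   at each internal vertex it keeps the state of one child, each with
   probability 1/2, and when both children agree either choice gives the same
   state.  Hence phi(T,f) = f(x) for the leaf x reached by a uniform random walk
   from the root, which reaches x with probability (1/2)^d(x).  Averaging over
   the characters gives RA = sum_x (1/2)^d(x) (1 - p(x)), and since these
   weights sum to 1 this is a convex combination, bounded below by 1 - p_max
   and equal to it when all p(x) coincide. *)

From HB Require Import structures.
From mathcomp Require Import all_boot all_order all_algebra.
From mathcomp Require Import ring.
Import Order.TTheory GRing.Theory Num.Theory.
Local Open Scope ring_scope.

Section TupleSums.
Context {V : nmodType} {T : finType}.

Lemma big_tuple0 (F : seq T -> V) : \sum_(s : 0.-tuple T) F s = F [::].
Proof.
by rewrite (big_pred1 [tuple]) // => s /=; apply/esym/eqP; exact: tuple0.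
Qed.

Lemma big_tuple_cons n (F : seq T -> V) :
  \sum_(s : n.+1.-tuple T) F s = \sum_(x : T) \sum_(s : n.-tuple T) F (x :: s).
Proof.
rewrite pair_big /=.
rewrite (reindex (fun p : T * n.-tuple T => cons_tuple p.1 p.2)) //=.
exists (fun s : n.+1.-tuple T => (thead s, behead_tuple s)).
  by case=> x s _; congr (_, _); apply: val_inj.
by move=> s _; apply: val_inj => /=; rewrite [in RHS](tuple_eta s).
Qed.

Lemma big_tuple_cat n1 n2 (F : seq T -> V) :
  \sum_(s : (n1 + n2).-tuple T) F s =
  \sum_(s1 : n1.-tuple T) \sum_(s2 : n2.-tuple T) F (s1 ++ s2).
Proof.
elim: n1 F => [|n1 IH] F.
  by rewrite (big_tuple0 (fun s1 => \sum_(s2 : n2.-tuple T) F (s1 ++ s2))).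
rewrite (big_tuple_cons n1 (fun s1 => \sum_(s2 : n2.-tuple T) F (s1 ++ s2))).
rewrite [LHS](big_tuple_cons (n1 + n2)); apply: eq_bigr => x _.
exact: (IH (fun s => F (x :: s))).
Qed.

End TupleSums.

Section NeymanModel.
Context {R : realFieldType} {r : nat}.
Hypothesis r_ge2 : (2 <= r)%N.
Implicit Types (t l rt : tree R) (p pl pr : R) (a : 'I_r).

Lemma size_depths t : size (depths t) = nleaves t.
Proof. by elim: t => //= _ l IHl _ rt IHr; rewrite size_cat !size_map IHl IHr. Qed.

Lemma nleaves_gt0 t : (0 < nleaves t)%N.
Proof. by elim: t => //= _ l IHl _ rt _; rewrite addn_gt0 IHl. Qed.

Lemma sum_trans p a : \sum_(b : 'I_r) trans p a b = 1.
Proof.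
have r1_neq0 : (r.-1)%:R != 0 :> R by rewrite pnatr_eq0; case: r r_ge2 => [|[|]].
rewrite (bigD1 a) //= /trans eqxx.
rewrite (eq_bigr (fun _ => p / (r.-1)%:R)); last first.
  by move=> b; rewrite eq_sym => /negbTE ->.
rewrite sumr_const (_ : #|_| = r.-1); last by rewrite cardC1 card_ord.
by rewrite -[p / _ *+ _]mulr_natr divfK ?subrK.
Qed.

Lemma trans_ge0 p a b : 0 <= p <= (r.-1)%:R / r%:R -> 0 <= trans p a b.
Proof.
case/andP=> p_ge0 p_le; rewrite /trans; case: eqP => _; last first.
  by rewrite divr_ge0 ?ler0n.
rewrite subr_ge0 (le_trans p_le) // ler_pdivrMr ?ltr0n ?(ltn_trans _ r_ge2) //.
by rewrite mul1r ler_nat leq_pred.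
Qed.

Lemma Pchar_ge0 t a f : valid_probs r t -> 0 <= Pchar t a f.
Proof.
elim: t a f => [|pl l IHl pr rt IHr] a f /=.
  by case: f => [|b [|]] //= _; rewrite ler0n.
case=> pl_ok pr_ok l_ok rt_ok.
by apply: mulr_ge0; apply: sumr_ge0 => b _;
  rewrite mulr_ge0 ?trans_ge0 ?IHl ?IHr.
Qed.

Lemma pleaf_ge0 t a i : valid_probs r t -> 0 <= pleaf t a i.
Proof.
by move=> t_ok; apply: sumr_ge0 => f _; rewrite mulr_ge0 ?ler0n ?Pchar_ge0.
Qed.

Lemma Pchar_Node_cat pl l pr rt a f1 f2 : size f1 = nleaves l ->
  Pchar (Node pl l pr rt) a (f1 ++ f2) =
  (\sum_(b : 'I_r) trans pl a b * Pchar l b f1) *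
  (\sum_(b : 'I_r) trans pr a b * Pchar rt b f2).
Proof. by move=> f1_size /=; rewrite take_size_cat ?drop_size_cat. Qed.

Lemma sum_Pchar t a : \sum_(f : (nleaves t).-tuple 'I_r) Pchar t a f = 1.
Proof.
elim: t a => [|pl l IHl pr rt IHr] a.
  rewrite (big_tuple_cons 0 (Pchar Leaf a)).
  under eq_bigr => b _ do rewrite (big_tuple0 (fun s => Pchar Leaf a (b :: s))) /=.
  by rewrite (bigD1 a) //= eqxx big1 ?addr0 // => b /negbTE->.
have sum_mix t' p : (forall b, \sum_(f : (nleaves t').-tuple 'I_r) Pchar t' b f = 1) ->
    \sum_(f : (nleaves t').-tuple 'I_r) \sum_(b : 'I_r) trans p a b * Pchar t' b f = 1.
  move=> sum1; rewrite exchange_big -(sum_trans p a) /=.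
  by apply: eq_bigr => b _; rewrite -mulr_sumr sum1 mulr1.
rewrite big_tuple_cat.
under eq_bigr => f1 _ do under eq_bigr => f2 _ do rewrite Pchar_Node_cat ?size_tuple //.
by rewrite -big_distrlr /= !sum_mix ?mulr1.
Qed.

Definition leaf_weight t (i : nat) : R := 2%:R^-1 ^+ nth 0%N (depths t) i.

Lemma leaf_weight_ge0 t i : 0 <= leaf_weight t i.
Proof. by rewrite exprn_ge0 // invr_ge0 ler0n. Qed.

Lemma leaf_weight_Node_l pl l pr rt i : (i < nleaves l)%N ->
  leaf_weight (Node pl l pr rt) i = 2%:R^-1 * leaf_weight l i.
Proof.
move=> lt_i; rewrite /leaf_weight /= nth_cat size_map size_depths lt_i.
by rewrite (nth_map 0%N) ?size_depths // exprS.
Qed.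

Lemma leaf_weight_Node_r pl l pr rt j : (j < nleaves rt)%N ->
  leaf_weight (Node pl l pr rt) (nleaves l + j) = 2%:R^-1 * leaf_weight rt j.
Proof.
move=> lt_j; rewrite /leaf_weight /= nth_cat size_map size_depths.
by rewrite ltnNge leq_addr /= addKn (nth_map 0%N) ?size_depths // exprS.
Qed.

Lemma sum_leaf_weight t : \sum_(i < nleaves t) leaf_weight t i = 1.
Proof.
elim: t => [|pl l IHl pr rt IHr]; first by rewrite big_ord1 /leaf_weight expr0.
rewrite big_split_ord /=.
under eq_bigr => i _ do rewrite leaf_weight_Node_l //.
under [X in _ + X]eq_bigr => j _ do rewrite leaf_weight_Node_r //.
by rewrite -!mulr_sumr IHl IHr; field.
Qed.

Lemma sum_leaf_weight_le t (x : nat -> R) (m : R) :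
  (forall i : 'I_(nleaves t), x i <= m) ->
  \sum_(i < nleaves t) leaf_weight t i * x i <= m.
Proof.
move=> x_le; rewrite -[leRHS]mul1r -(sum_leaf_weight t) mulr_suml.
by apply: ler_sum => i _; rewrite ler_wpM2l ?leaf_weight_ge0.
Qed.

Lemma sum_leaf_weight_const t (x : nat -> R) (m : R) :
  (forall i : 'I_(nleaves t), x i = m) ->
  \sum_(i < nleaves t) leaf_weight t i * x i = m.
Proof.
move=> x_eq; under eq_bigr => i _ do rewrite x_eq.
by rewrite -mulr_suml sum_leaf_weight mul1r.
Qed.

Section CoinToss.
Variable a : 'I_r.

Definition coin_hits t (f : seq 'I_r) : R :=
  \sum_(c : (ninternal t).-tuple bool) (phi a t f c == a)%:R.

Lemma phi_Node_first_coin pl l pr rt f c1 c2 : size c1 = ninternal l ->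
  \sum_(x : bool) (phi a (Node pl l pr rt) f (x :: c1 ++ c2) == a)%:R =
  (phi a l (take (nleaves l) f) c1 == a)%:R +
  (phi a rt (drop (nleaves l) f) c2 == a)%:R :> R.
Proof.
move=> c1_size; rewrite big_bool /= take_size_cat ?drop_size_cat //.
set sl := phi a l _ c1; set sr := phi a rt _ c2.
by case: (eqVneq sl sr) => [->|].
Qed.

Lemma coin_hits_Node pl l pr rt f :
  coin_hits (Node pl l pr rt) f =
  coin_hits l (take (nleaves l) f) * (2 ^ ninternal rt)%:R +
  (2 ^ ninternal l)%:R * coin_hits rt (drop (nleaves l) f).
Proof.
pose hit c := (phi a (Node pl l pr rt) f c == a)%:R : R.
rewrite /coin_hits /= (big_tuple_cons _ hit) exchange_big /=.
rewrite (big_tuple_cat _ _ (fun c => \sum_(x : bool) hit (x :: c))) /=.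
under eq_bigr => c1 _ do under eq_bigr => c2 _ do
  rewrite /hit phi_Node_first_coin ?size_tuple //.
under eq_bigr => c1 _ do rewrite big_split /=.
rewrite big_split /= [X in _ + X]sumr_const card_tuple card_bool mulr_natl.
congr (_ + _); rewrite mulr_suml; apply: eq_bigr => c1 _.
by rewrite sumr_const card_tuple card_bool mulr_natr.
Qed.

Lemma coin_hits_leaf_weight t f : size f = nleaves t ->
  coin_hits t f / 2%:R ^+ ninternal t =
  \sum_(i < nleaves t) leaf_weight t i * (nth a f i == a)%:R.
Proof.
elim: t f => [|pl l IHl pr rt IHr] f f_size.
  rewrite /coin_hits (big_tuple0 (fun c => (phi a Leaf f c == a)%:R)).
  by rewrite big_ord1 /leaf_weight /= expr0 !divr1 mul1r.
have fl_size : size (take (nleaves l) f) = nleaves l.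
  by rewrite size_takel // f_size leq_addr.
have fr_size : size (drop (nleaves l) f) = nleaves rt.
  by rewrite size_drop f_size addKn.
rewrite big_split_ord /=.
under eq_bigr => i _ do rewrite leaf_weight_Node_l // -mulrA -(nth_take _ (ltn_ord i)).
under [X in _ + X]eq_bigr => j _ do
  rewrite leaf_weight_Node_r // -mulrA -(nth_drop (nleaves l)).
rewrite -!mulr_sumr -IHl // -IHr // coin_hits_Node !natrX.
have two_neq0 : (2%:R : R) != 0 by rewrite pnatr_eq0.
by rewrite exprS exprD; field; rewrite !expf_neq0.
Qed.

Lemma RA_leaf_weight t :
  RA t a = 1 - \sum_(i < nleaves t) leaf_weight t i * pleaf t a i.
Proof.
rewrite /RA.
under eq_bigr => f _ do rewrite -mulr_suml coin_hits_leaf_weight ?size_tuple // mulr_sumr.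
rewrite exchange_big /= -[X in X - _](sum_leaf_weight t) -sumrB.
apply: eq_bigr => i _.
rewrite -[X in X - _]mulr1 -mulrBr -[X in _ * (X - _)](sum_Pchar t a) -sumrB mulr_sumr.
by apply: eq_bigr => f _; case: (nth a f i == a) => /=; ring.
Qed.

End CoinToss.

End NeymanModel.

Theorem theorem2 (R : realFieldType) (r : nat) (hr : (2 <= r)%N)
  (t : tree R) (hroot : is_node t) (hvalid : valid_probs r t)
  (alpha : 'I_r) :
  [/\ RA t alpha =
        1 - \sum_(i < nleaves t)
              (2%:R^-1) ^+ (nth 0%N (depths t) i) * pleaf t alpha i,
      1 - pmax t alpha <= RA t alpha
    & (forall i j : 'I_(nleaves t), pleaf t alpha i = pleaf t alpha j) ->
      RA t alpha = 1 - pmax t alpha].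
Proof.
have RA_eq := RA_leaf_weight hr alpha t.
have le_pmax (i : 'I_(nleaves t)) : pleaf t alpha i <= pmax t alpha.
  exact: (le_bigmax _ (fun j : 'I_(nleaves t) => pleaf t alpha j)).
split=> [//||pleaf_const].
  by rewrite RA_eq lerD2l lerN2 sum_leaf_weight_le.
pose i0 := Ordinal (nleaves_gt0 t).
have pmax_eq : pmax t alpha = pleaf t alpha i0.
  apply/le_anti; rewrite le_pmax andbT.
  by apply: bigmax_le => [|i _]; rewrite ?pleaf_ge0 ?(pleaf_const i i0).
rewrite RA_eq; congr (_ - _); apply: sum_leaf_weight_const => i.
by rewrite pmax_eq (pleaf_const i i0).
Qed.
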